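(* Let $x_0,\dots,x_T$ be generated by $x_0=0_n$, $x_{t+1}=\bar A f(x_t)+\bar d_t$ for $t=0,\dots,T-1$. Then $\bar A$ is a global minimizer of $$\min_{A\in\mathbb{R}^{n\times m}} \sum_{t=0}^{T-1}\|(\bar A - A) f(x_t)+\bar d_t\|_2$$ if and only if $$\sum_{t\in\mathcal K}\hat d_t^\top Z^\top f(x_t)\le \sum_{t\in\mathcal K^c}\|Z^\top f(x_t)\|_2\qquad\text{for all } Z\in\mathbb{R}^{m\times n}.$$
   Context: $f:\mathbb{R}^n\to\mathbb{R}^m$ is a given (basis) function, $\bar A\in\mathbb{R}^{n\times m}$ is the ground-truth matrix, and $\bar d_0,\dots,\bar d_{T-1}\in\mathbb{R}^n$ are attack vectors. The attack set is $\mathcal K:=\{t\in\{0,\dots,T-1\}:\bar d_t\neq 0\}$, $\mathcal K^c:=\{0,\dots,T-1\}\setminus\mathcal K$, and $\hat d_t:=\bar d_t/\|\bar d_t\|_2$ for $t\in\mathcal K$. Note the objective equals $\sum_{t=0}^{T-1}\|x_{t+1}-Af(x_t)\|_2$. *)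

From HB Require Import structures.
From mathcomp Require Import all_boot all_order all_algebra.
From mathcomp Require Import reals.
Set Implicit Arguments. Unset Strict Implicit. Unset Printing Implicit Defensive.
Import Order.TTheory GRing.Theory Num.Theory.
Local Open Scope ring_scope.

Definition dotv (R : realType) (k : nat) (u v : 'cV[R]_k) : R :=
  \sum_(i < k) u i 0 * v i 0.
Definition norm2 (R : realType) (k : nat) (v : 'cV[R]_k) : R :=
  Num.sqrt (\sum_(i < k) v i 0 ^+ 2).

Fixpoint traj (R : realType) (n m : nat) (A : 'M[R]_(n, m))
  (f : 'cV[R]_n -> 'cV[R]_m) (d : nat -> 'cV[R]_n) (t : nat) : 'cV[R]_n :=
  match t with
  | 0 => 0
  | t'.+1 => A *m f (traj A f d t') + d t'
  end.

Definition objective (R : realType) (n m T : nat) (Abar : 'M[R]_(n, m))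
  (f : 'cV[R]_n -> 'cV[R]_m) (d : nat -> 'cV[R]_n) (A : 'M[R]_(n, m)) : R :=
  \sum_(t < T) norm2 ((Abar - A) *m f (traj Abar f d t) + d t).

Definition dhat (R : realType) (n : nat) (d : nat -> 'cV[R]_n) (t : nat) : 'cV[R]_n :=
  (norm2 (d t))^-1 *: d t.

From HB Require Import structures.
From mathcomp Require Import all_boot all_order all_algebra.
From mathcomp Require Import reals.
From mathcomp Require Import ring lra.
Import Order.TTheory GRing.Theory Num.Theory.
Local Open Scope ring_scope.
Set Implicit Arguments. Unset Strict Implicit.

(** The objective is a sum of Euclidean norms [F(B) = \sum_t ||d_t + B f(x_t)||],
    a convex function of [B = Abar - A] whose value at [B = 0] is [\sum_t ||d_t||].
    Along a direction [v_t = B f(x_t)] its one-sided derivative at [0] is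
    [\sum_{d_t <> 0} dhat_t . v_t + \sum_{d_t = 0} ||v_t||].  Convexity
    ([||d + v|| >= ||d|| + dhat . v]) makes nonnegativity of this derivative in
    every direction sufficient for global minimality, and the second-order
    bound [||d + e v|| <= ||d|| + e dhat . v + e^2 ||v||^2 / (2 ||d||)] makes it
    necessary.  For [v_t = - Z^T f(x_t)] the derivative is the right-hand side
    minus the left-hand side of the stated inequality. *)

Section EuclideanNorm.
Variables (R : realType) (k : nat).
Implicit Types x y : 'cV[R]_k.

Lemma dotvC x y : dotv x y = dotv y x.
Proof. by apply: eq_bigr => i _; rewrite mulrC. Qed.

Lemma dotvDl x y z : dotv (x + y) z = dotv x z + dotv y z.
Proof. by rewrite /dotv -big_split; apply: eq_bigr => i _; rewrite mxE mulrDl. Qed.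

Lemma dotvDr x y z : dotv z (x + y) = dotv z x + dotv z y.
Proof. by rewrite !(dotvC z) dotvDl. Qed.

Lemma dotvZl (a : R) x y : dotv (a *: x) y = a * dotv x y.
Proof. by rewrite /dotv mulr_sumr; apply: eq_bigr => i _; rewrite mxE mulrA. Qed.

Lemma dotvZr (a : R) x y : dotv x (a *: y) = a * dotv x y.
Proof. by rewrite dotvC dotvZl dotvC. Qed.

Lemma dotvNr x y : dotv x (- y) = - dotv x y.
Proof. by rewrite -scaleN1r dotvZr mulN1r. Qed.

Lemma dotv0l y : dotv 0 y = 0.
Proof. by rewrite -(scale0r 0) dotvZl mul0r. Qed.

Lemma dotvv_ge0 x : 0 <= dotv x x.
Proof. by apply: sumr_ge0 => i _; rewrite -expr2 sqr_ge0. Qed.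

Lemma dotvv_eq0 x : (dotv x x == 0) = (x == 0).
Proof.
apply/idP/eqP => [|->]; last by rewrite dotv0l.
rewrite psumr_eq0 => [/allP x0|i _]; last by rewrite -expr2 sqr_ge0.
apply/matrixP => i j; rewrite (ord1 j) mxE.
by apply/eqP; rewrite -sqrf_eq0 expr2 (implyP (x0 i (mem_index_enum i))).
Qed.

Lemma norm2E x : norm2 x = Num.sqrt (dotv x x).
Proof. by congr Num.sqrt; apply: eq_bigr => i _; rewrite expr2. Qed.

Lemma norm2_ge0 x : 0 <= norm2 x.
Proof. by rewrite norm2E sqrtr_ge0. Qed.

Lemma norm2_sq x : norm2 x ^+ 2 = dotv x x.
Proof. by rewrite norm2E sqr_sqrtr // dotvv_ge0. Qed.

Lemma norm2_0 : norm2 (0 : 'cV[R]_k) = 0.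
Proof. by rewrite norm2E dotv0l sqrtr0. Qed.

Lemma norm2_gt0 x : x != 0 -> 0 < norm2 x.
Proof. by rewrite -dotvv_eq0 norm2E sqrtr_gt0 lt_def dotvv_ge0 andbT. Qed.

Lemma norm2N x : norm2 (- x) = norm2 x.
Proof. by rewrite !norm2E dotvNr dotvC dotvNr opprK. Qed.

Lemma norm2Z (a : R) x : 0 <= a -> norm2 (a *: x) = a * norm2 x.
Proof.
move=> a_ge0; rewrite !norm2E dotvZl dotvZr mulrA -expr2.
by rewrite sqrtrM ?sqr_ge0 // sqrtr_sqr ger0_norm.
Qed.

Lemma norm2D_sq x y : norm2 (x + y) ^+ 2 = norm2 x ^+ 2 + 2 * dotv x y + dotv y y.
Proof. by rewrite !norm2_sq !dotvDl !dotvDr (dotvC y x); ring. Qed.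

Lemma dotv_le_norm2 x y : dotv x y <= norm2 x * norm2 y.
Proof.
have [->|x_neq0] := eqVneq x 0; first by rewrite dotv0l mulr_ge0 ?norm2_ge0.
(* the squared distance from [y] to its projection on [x] is nonnegative *)
have := dotvv_ge0 (y + (- (dotv x y / norm2 x ^+ 2)) *: x).
rewrite -norm2_sq norm2D_sq !dotvZr dotvZl -!norm2_sq (dotvC y x).
have := norm2_ge0 y; have := norm2_gt0 x_neq0.
set p := dotv x y; set N := norm2 y; set D := norm2 x => D_gt0 N_ge0.
have -> : N ^+ 2 + 2 * (- (p / D ^+ 2) * p) + - (p / D ^+ 2) * (- (p / D ^+ 2) * D ^+ 2)
          = ((D * N) ^+ 2 - p ^+ 2) / D ^+ 2 by field; rewrite gt_eqF.
rewrite pmulr_lge0 ?invr_gt0 ?exprn_gt0 //.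
have := mulr_ge0 (ltW D_gt0) N_ge0; nra.
Qed.

Definition normalize x := (norm2 x)^-1 *: x.

Lemma dotv_normalize x y : dotv (normalize x) y = dotv x y / norm2 x.
Proof. by rewrite dotvZl mulrC. Qed.

Definition norm2_deriv x y : R :=
  if x == 0 then norm2 y else dotv (normalize x) y.

Lemma norm2_addr_ge x y : norm2 x + norm2_deriv x y <= norm2 (x + y).
Proof.
rewrite /norm2_deriv; have [->|x_neq0] := eqVneq x 0; first by rewrite norm2_0 !add0r.
have Dx := norm2_gt0 x_neq0.
rewrite dotv_normalize -(ler_pM2l Dx) mulrDr mulrCA divff ?gt_eqF // mulr1.
by rewrite -expr2 norm2_sq -dotvDr dotv_le_norm2.
Qed.

Lemma norm2_addr_le (e : R) x y : x != 0 ->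
  norm2 (x + e *: y) <=
    norm2 x + e * norm2_deriv x y + e ^+ 2 * (dotv y y / (2 * norm2 x)).
Proof.
move=> x_neq0; have Dx := norm2_gt0 x_neq0.
rewrite /norm2_deriv (negbTE x_neq0) dotv_normalize.
rewrite -(ler_pM2l (_ : 0 < 2 * norm2 x)) ?mulr_gt0 //.
have -> : 2 * norm2 x * (norm2 x + e * (dotv x y / norm2 x)
                          + e ^+ 2 * (dotv y y / (2 * norm2 x)))
          = norm2 x ^+ 2 + norm2 (x + e *: y) ^+ 2.
  by rewrite norm2D_sq dotvZr dotvZl dotvZr; field; rewrite gt_eqF.
(* AM-GM: [2 D N <= D^2 + N^2] *)
by have := sqr_ge0 (norm2 x - norm2 (x + e *: y)); nra.
Qed.

End EuclideanNorm.

Section SumOfNorms.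
Variables (R : realType) (k : nat) (I : finType).
Implicit Types d v : I -> 'cV[R]_k.

Definition dir_deriv d v : R := \sum_i norm2_deriv (d i) (v i).

Lemma dir_derivN d v :
  dir_deriv d (fun i => - v i) =
  \sum_(i | d i == 0) norm2 (v i) - \sum_(i | d i != 0) dotv (normalize (d i)) (v i).
Proof.
rewrite (big_mkcond (fun i => d i == 0)) (big_mkcond (fun i => d i != 0)) -sumrN -big_split.
apply: eq_bigr => i _; rewrite /norm2_deriv.
by case: eqP => _ /=; rewrite ?norm2N ?dotvNr ?subr0 ?sub0r.
Qed.

Lemma sum_norm2_addr_ge d v :
  \sum_i norm2 (d i) + dir_deriv d v <= \sum_i norm2 (d i + v i).
Proof. by rewrite -big_split; apply: ler_sum => i _; apply: norm2_addr_ge. Qed.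

Lemma sum_norm2_addr_le d v : exists2 C : R, 0 <= C &
  forall e, 0 < e -> \sum_i norm2 (d i + e *: v i) <=
                     \sum_i norm2 (d i) + e * dir_deriv d v + e ^+ 2 * C.
Proof.
exists (\sum_i if d i == 0 then 0 else dotv (v i) (v i) / (2 * norm2 (d i))).
  by apply: sumr_ge0 => i _; case: eqP => _; rewrite ?divr_ge0 ?mulr_ge0 ?dotvv_ge0 ?norm2_ge0.
move=> e e_gt0; rewrite /dir_deriv !mulr_sumr -!big_split /=.
apply: ler_sum => i _; have [d0|d_neq0] := eqVneq (d i) 0.
  by rewrite /norm2_deriv d0 eqxx add0r norm2Z ?(ltW e_gt0) // norm2_0 add0r mulr0 addr0.
exact: norm2_addr_le.
Qed.

Lemma ray_min_dir_deriv_ge0 d v :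
  (forall e, 0 < e -> \sum_i norm2 (d i) <= \sum_i norm2 (d i + e *: v i)) ->
  0 <= dir_deriv d v.
Proof.
move=> dmin; have [C C_ge0 dle] := sum_norm2_addr_le d v.
apply/ler_addgt0Pr => e e_gt0.
have C1_gt0 : 0 < C + 1 by lra.
set e' := e / (C + 1); have e'_gt0 : 0 < e' by rewrite divr_gt0.
have e'C_le : e' * C <= e by rewrite /e' mulrAC ler_pdivrMr //; nra.
have := le_trans (dmin e' e'_gt0) (dle e' e'_gt0).
rewrite -addrA lerDl expr2 -mulrA -mulrDr pmulr_rge0 //; lra.
Qed.

End SumOfNorms.

Theorem theorem1 (R : realType) (n m T : nat) (f : 'cV[R]_n -> 'cV[R]_m)
  (Abar : 'M[R]_(n, m)) (d : nat -> 'cV[R]_n) :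
  (forall A : 'M[R]_(n, m), objective T Abar f d Abar <= objective T Abar f d A)
  <->
  (forall Z : 'M[R]_(m, n),
     \sum_(t < T | d t != 0) dotv (dhat d t) (Z^T *m f (traj Abar f d t))
     <= \sum_(t < T | d t == 0) norm2 (Z^T *m f (traj Abar f d t))).
Proof.
set fx := fun t => f (traj Abar f d t).
have objE A : objective T Abar f d A = \sum_(t < T) norm2 (d t + (Abar - A) *m fx t).
  by apply: eq_bigr => t _; rewrite addrC.
have obj_Abar : objective T Abar f d Abar = \sum_(t < T) norm2 (d t).
  by rewrite objE; apply: eq_bigr => t _; rewrite subrr mul0mx addr0.
have critE Z : (\sum_(t < T | d t != 0) dotv (dhat d t) (Z^T *m fx t)
                <= \sum_(t < T | d t == 0) norm2 (Z^T *m fx t))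
             = (0 <= dir_deriv (fun t : 'I_T => d t) (fun t => - (Z^T *m fx t))).
  by rewrite dir_derivN subr_ge0.
split => [Amin Z | crit A].
- rewrite critE; apply: ray_min_dir_deriv_ge0 => e e_gt0.
  have dirE t : (Abar - (Abar + e *: Z^T)) *m fx t = e *: - (Z^T *m fx t).
    by rewrite opprD addNKr mulNmx -scalemxAl scalerN.
  have := Amin (Abar + e *: Z^T); rewrite obj_Abar objE.
  by move/le_trans; apply; under eq_bigr do rewrite dirE.
- have dirE t : (Abar - A) *m fx t = - ((A - Abar)^T^T *m fx t).
    by rewrite trmxK -mulNmx opprB.
  rewrite obj_Abar objE; under [X in _ <= X]eq_bigr do rewrite dirE.
  apply: le_trans (sum_norm2_addr_ge _ _); rewrite lerDl -critE; exact: crit.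
Qed.
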